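(* For any coprime $r>1$ and $0<a<r$, on the Danilov resolution of $\frac1r(1,a,r-a)$ one has $R_1=D_X-E_1$, i.e. $R_1=\sum_{i=0}^r e_1^*(p_i)D_i$.
   Context: Notation: for integers $s$ and $t>0$, $\langle s\rangle_t$ is the least non-negative integer congruent to $s$ modulo $t$. A pair of integers $(r,a)$ is admissible if $r\ge1$, $0\le a<r$, $\gcd(r,a)=1$ (so $a=0$ only for $r=1$). For admissible $(r,a)$ put $N(r,a)=\mathbb Z^3+\mathbb Z\cdot\frac1r(1,a,r-a)\subset\mathbb Q^3$; $e_1,e_2,e_3$ is the standard basis, $e_j^*$ the $j$-th coordinate function, and $\Delta(r,a)$ the cone spanned by $e_1,e_2,e_3$. Let $b$ be an inverse of $a$ modulo $r$ and $p_i=\frac1r(\langle -ib\rangle_r,r-i,i)$, $i=0,\dots,r$ (so $p_0=e_2$, $p_r=e_3$, $p_{r-a}=\frac1r(1,a,r-a)$). For $r>1$ let $(r_L,a_L)=(r-a,\langle r\rangle_{r-a})$, $(r_R,a_R)=(a,\langle -r\rangle_a)$; there are lattice isomorphisms $L:N(r_L,a_L)\to N(r,a)$, $R:N(r_R,a_R)\to N(r,a)$ with $L(e_1)=e_1$, $L(e_2)=e_2$, $L(e_3)=p_{r-a}$, $R(e_1)=e_1$, $R(e_2)=p_{r-a}$, $R(e_3)=e_3$. The Danilov fan $\Sigma(r,a)$ is defined recursively: $\Sigma(1,0)$ is $\Delta(1,0)$ with its faces; for $r>1$, $\Sigma(r,a)$ consists of the cone spanned by $e_2,e_3,p_{r-a}$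 with its faces, together with $L(\Sigma(r_L,a_L))$ and $R(\Sigma(r_R,a_R))$. The Danilov resolution $Y$ is the smooth toric variety of $\Sigma(r,a)$, with torus $T$; its rays are spanned by $e_1,p_0,\dots,p_r$; $D_i$ is the $T$-invariant prime divisor of the ray through $p_i$ and $E_j$ that of $e_j$. The permutation $\tau(r,a,\cdot)$ of $\{0,\dots,r-1\}$: if $a\in\{1,r-1\}$, $\tau(r,a,i)=\langle ai-1\rangle_r$; otherwise $\tau(r,a,i)=\tau(r-a,\langle r\rangle_{r-a},\langle i\rangle_{r-a})$ for $i\ge a$ and $\tau(r,a,i)=(r-a)+\tau(a,\langle -r\rangle_a,i)$ for $i<a$. With indices mod $r$, define $Z_i=\sum_{k=\tau(r,a,i)+1}^{r}D_k$ ($i=0,\dots,r-1$). Define the $\mathbb Q$-divisors $D_X=E_1+\sum_{i=0}^r e_1^*(p_i)D_i$, $D_Z=\sum_{i=0}^r e_3^*(p_i)D_i$, and let $R_0,\dots,R_{r-1}$ be the unique $\mathbb Q$-divisors with $R_0=0$ and $Z_i=D_Z+R_i-R_{i-a}$ for all $i$ (indices mod $r$). *)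

From HB Require Import structures.
From mathcomp Require Import all_boot all_order all_algebra.
Set Implicit Arguments. Unset Strict Implicit. Unset Printing Implicit Defensive.
Import Order.TTheory GRing.Theory Num.Theory.
Local Open Scope ring_scope.

(* T-invariant Q-divisors on the Danilov resolution Y of 1/r(1,a,r-a):
   the rays of Sigma(r,a) are e_1, p_0, ..., p_r (pairwise distinct), so a
   T-invariant Q-divisor is a Q-combination of E_1 (index None) and
   D_0, ..., D_r (index Some i). *)
Definition divisor (r : nat) := {ffun option 'I_r.+1 -> rat}.

Definition E1_coef (r : nat) (x : option 'I_r.+1) : rat :=
  match x with None => 1 | Some _ => 0 end.
Definition E1 (r : nat) : divisor r := finfun (@E1_coef r).

Definition Dd_coef (r i : nat) (x : option 'I_r.+1) : rat :=
  match x with Some j => if (nat_of_ord j == i)%N then 1 else 0 | None => 0 end.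
Definition Dd (r : nat) (i : nat) : divisor r := finfun (@Dd_coef r i).

Definition dscale (r : nat) (c : rat) (D : divisor r) : divisor r :=
  [ffun x => c * D x].

(* <s>_t for s = -n (n : nat), t > 0 *)
Definition modneg (n t : nat) : nat := ((t - n %% t) %% t)%N.

(* coordinates of p_i = 1/r (<-ib>_r, r-i, i) *)
Definition e1p (r b i : nat) : rat := (modneg (i * b) r)%:R / r%:R.
Definition e3p (r i : nat) : rat := i%:R / r%:R.

Definition DX (r b : nat) : divisor r :=
  E1 r + \sum_(i < r.+1) dscale (e1p r b i) (Dd r i).

Definition DZ (r : nat) : divisor r :=
  \sum_(i < r.+1) dscale (e3p r i) (Dd r i).

(* The permutation tau(r,a,.), by recursion on r (with fuel n >= r). *)
Fixpoint tau_aux (n r a i : nat) : nat := (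
  match n with
  | 0 => 0
  | n'.+1 =>
      if (a == 1)%N || (a == r.-1)%N then (a * i + r - 1) %% r
      else if (a <= i)%N then tau_aux n' (r - a) (r %% (r - a)) (i %% (r - a))
      else r - a + tau_aux n' a (modneg r a) i
  end)%N.

Definition tau (r a i : nat) : nat := tau_aux r r a i.

Definition Zdiv (r a i : nat) : divisor r :=
  \sum_(k < r.+1 | (tau r a i < k)%N) Dd r k.

(* R_0, ..., R_{r-1} (given as a function on nat, only the values at
   0..r-1 matter) satisfy R_0 = 0 and Z_i = D_Z + R_i - R_{i-a} (mod r). *)
Definition R_spec (r a : nat) (R : nat -> divisor r) : Prop :=
  R 0%N = 0 /\
  forall i : nat, (i < r)%N ->
    Zdiv r a i = DZ r + R i - R ((i + (r - a)) %% r)%N.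

From HB Require Import structures.
From mathcomp Require Import all_boot all_order all_algebra.
From mathcomp Require Import zify ring.
Import Order.TTheory GRing.Theory Num.Theory.

(* Along the cycle i = l a (mod r) the defining relation reads
   R_{(l+1)a} = R_{la} + (Z_{(l+1)a} - D_Z), so R_{la} is the partial sum of these steps up to l;
   the sum closes up after r steps, giving existence and uniqueness, because tau permutes
   {0, ..., r-1}.  Since b a = 1 (mod r), R_1 is the partial sum up to l = b, and its
   D_j-coefficient is #{1 <= l <= b : tau(l a) < j} - b j / r.  The residues l a with 1 <= l <= b
   are exactly the i at which the ceiling of i b / r increases, and induction along the
   recursion defining tau shows that these i contribute exactly ceil(j b / r) to the count;
   writing a b = c r + 1, the children (r - a, <r>_{r-a}) and (a, <-r>_a) have the inverses
   b - c and c.  Finally ceil(j b / r) - j b / r = <-j b>_r / r = e_1^*(p_j). *)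

Local Open Scope nat_scope.

Definition ceil_frac (n d i : nat) : nat := (i * n + d - 1) %/ d.
Definition ceil_jump (n d i : nat) : nat := ceil_frac n d i - ceil_frac n d i.-1.

Lemma ceil_divn_unique d x q : 0 < d -> x <= q * d -> q * d < x + d ->
  (x + d - 1) %/ d = q.
Proof.
move=> d_gt0 lb ub; have -> : x + d - 1 = q * d + (x + d - 1 - q * d) by lia.
by rewrite divnMDl // divn_small ?addn0 //; lia.
Qed.

Lemma ceil_divn_bounds d x : 0 < d ->
  x <= (x + d - 1) %/ d * d /\ (x + d - 1) %/ d * d < x + d.
Proof.
move=> d_gt0; have := divn_eq (x + d - 1) d; have := ltn_pmod (x + d - 1) d_gt0; lia.
Qed.

Lemma ceil_divn_eucl d q t : t < d -> (q * d + t + d - 1) %/ d = q + (0 < t).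
Proof. by move=> t_lt; apply: ceil_divn_unique; case: (posnP t) => /= t0; nia. Qed.

Lemma ceil_frac0 n d : 0 < d -> ceil_frac n d 0 = 0.
Proof. by move=> d_gt0; rewrite /ceil_frac mul0n add0n divn_small //; lia. Qed.

Lemma ceil_fracMD n d q j : 0 < d ->
  ceil_frac n d (q * d + j) = q * n + ceil_frac n d j.
Proof.
move=> d_gt0; rewrite /ceil_frac.
have -> : (q * d + j) * n + d - 1 = q * n * d + (j * n + d - 1) by nia.
by rewrite divnMDl.
Qed.

Lemma ceil_frac_id n d : n < d -> ceil_frac n d d = n.
Proof. by move=> n_lt; apply: ceil_divn_unique; nia. Qed.

Lemma ceil_jump_mod n d i : n < d -> ceil_jump n d i = ceil_jump n d (i %% d).
Proof.
move=> n_lt; have d_gt0 : 0 < d by lia.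
rewrite {1}(divn_eq i d); set q := i %/ d; set j := i %% d.
case: (posnP j) => [-> | j_gt0]; last first.
  by rewrite /ceil_jump (_ : (q * d + j).-1 = q * d + j.-1) ?ceil_fracMD //; lia.
rewrite addn0 /ceil_jump ceil_frac0 //; case: (posnP q) => [-> | q_gt0] /=.
  by rewrite ceil_frac0.
have -> : (q * d).-1 = (q - 1) * d + d.-1 by nia.
rewrite -[q * d]addn0 !ceil_fracMD // ceil_frac0 //.
have -> : ceil_frac n d d.-1 = n by apply: ceil_divn_unique; nia.
nia.
Qed.

Lemma ceil_jumpE b r i : b < r -> i < r ->
  ceil_jump b r i = (0 < i * b %% r) && (i * b %% r <= b).
Proof.
move=> b_lt i_lt; have r_gt0 : 0 < r by lia.
case: (posnP i) => [-> | i_gt0]; first by rewrite /ceil_jump subnn mul0n mod0n.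
rewrite /ceil_jump /ceil_frac (_ : i.-1 * b = i * b - b); last by rewrite -subn1 mulnBl mul1n.
have := divn_eq (i * b) r; have := ltn_pmod (i * b) r_gt0.
set q := i * b %/ r; set t := i * b %% r => t_lt ->.
rewrite ceil_divn_eucl //; have [b_le | t_lt_b] := leqP b t.
  rewrite (_ : q * r + t - b = q * r + (t - b)); last by lia.
  by rewrite ceil_divn_eucl; last lia; case: (posnP (t - b)) => /=; lia.
have q_gt0 : 0 < q by nia.
rewrite (_ : q * r + t - b = (q - 1) * r + (r + t - b)); last by nia.
by rewrite ceil_divn_eucl; last lia; case: (posnP t) => /=; lia.
Qed.

Lemma ceil_frac_modneg b r j : b < r ->
  ceil_frac b r j * r = j * b + modneg (j * b) r.
Proof.
move=> b_lt; have r_gt0 : 0 < r by lia.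
rewrite /modneg /ceil_frac; move: (j * b) => x.
rewrite (divn_eq x r); move: (ltn_pmod x r_gt0); move: (x %/ r) (x %% r) => q t t_lt.
rewrite ceil_divn_eucl // modnMDl; case: (posnP t) => [-> | t_gt0] /=.
  by rewrite mod0n subn0 modnn; lia.
by rewrite (modn_small t_lt) modn_small; lia.
Qed.

Lemma sum_ltn_ord r k : \sum_(i < r) (i < k) = minn k r.
Proof.
elim: r => [|r IH]; first by rewrite big_ord0; lia.
by rewrite big_ord_recr /= IH; case: (ltnP r k) => /=; lia.
Qed.

Lemma sum_nat_modn s m (G : nat -> nat) :
  \sum_(m <= i < m + s) G (i %% s) = \sum_(0 <= i < s) G i.
Proof.
elim: m => [|m IH].
  by rewrite add0n; apply: eq_big_nat => i /andP [_ i_lt]; rewrite modn_small.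
case: (posnP s) => [-> | s_gt0]; first by rewrite !addn0 !big_geq.
rewrite -{}IH addSn big_nat_recr /=; last lia.
rewrite [RHS]big_ltn; last lia.
by rewrite modnDr addnC.
Qed.

Lemma sum_split_modn r a (F FL FR : nat -> nat) : a <= r ->
  (forall i, i < a -> F i = FR i) ->
  (forall i, a <= i < r -> F i = FL (i %% (r - a))) ->
  \sum_(i < r) F i = \sum_(i < a) FR i + \sum_(i < r - a) FL i.
Proof.
move=> a_le FRE FLE; rewrite -(big_mkord xpredT) (big_cat_nat _ (n := a)) //= big_mkord.
rewrite -(big_mkord xpredT FL) -(sum_nat_modn (r - a) a) subnKC //; congr (_ + _).
  by apply: eq_bigr => i _; apply: FRE.
by apply: eq_big_nat => i i_in; apply: FLE.
Qed.

Lemma sum_ltn_inj r (t : nat -> nat) k :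
  (forall i, i < r -> t i < r) ->
  (forall i j, i < r -> j < r -> t i = t j -> i = j) ->
  \sum_(i < r) (t i < k) = minn k r.
Proof.
move=> t_lt t_inj; pose h (i : 'I_r) : 'I_r := Ordinal (t_lt i (ltn_ord i)).
have h_inj : injective h.
  by move=> i j /(congr1 val) /(t_inj _ _ (ltn_ord i) (ltn_ord j)) /val_inj.
by rewrite -sum_ltn_ord [RHS](reindex_inj h_inj).
Qed.

Lemma modn_mulI r a b : a * b %% r = 1 ->
  forall i j, a * i = a * j %[mod r] -> i = j %[mod r].
Proof.
move=> abE i j aij; have inv x : x %% r = b * (a * x) %% r.
  by rewrite mulnA [b * a]mulnC -modnMml abE mul1n.
by rewrite inv [RHS]inv -modnMmr aij modnMmr.
Qed.

Lemma modn_predn_sqr r : 1 < r -> r.-1 * r.-1 %% r = 1.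
Proof.
by move=> r_gt1; rewrite (_ : r.-1 * r.-1 = (r - 2) * r + 1) ?modnMDl ?modn_small //; nia.
Qed.

(* For all [k], the first identity says that [t] permutes [0, r). *)
Definition tau_counts (t : nat -> nat) (r b : nat) : Prop :=
  forall k, k <= r ->
    \sum_(i < r) (t i < k) = k /\
    \sum_(i < r) ceil_jump b r i * (t i < k) = ceil_frac b r k.

Lemma sum_affine_modn_ltn r a b k : 1 < r -> a * b %% r = 1 -> k <= r ->
  \sum_(i < r) ((a * i + r - 1) %% r < k) = k.
Proof.
move=> r_gt1 abE k_le; rewrite (@sum_ltn_inj r (fun i => (a * i + r - 1) %% r)); first lia.
  by move=> i _; rewrite ltn_pmod //; lia.
move=> i j i_lt j_lt.
have shift x : x + r - 1 = x + r.-1 by lia.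
rewrite !shift => /eqP; rewrite eqn_modDr => /eqP /(modn_mulI _ _ _ abE).
by rewrite !modn_small.
Qed.

Lemma ceil_jump_one r i : 1 < r -> i < r -> ceil_jump 1 r i = (i == 1).
Proof.
by move=> r_gt1 i_lt; rewrite ceil_jumpE // muln1 modn_small //; case: i {i_lt} => [|[|]].
Qed.

Lemma ceil_frac_one r k : 0 < r -> k <= r -> ceil_frac 1 r k = (0 < k).
Proof. by move=> r_gt0 k_le; apply: ceil_divn_unique => //; case: (posnP k) => /=; lia. Qed.

Lemma tau_counts_one r : 1 < r -> tau_counts (fun i => (1 * i + r - 1) %% r) r 1.
Proof.
move=> r_gt1 k k_le; split; first by apply: (sum_affine_modn_ltn _ _ 1); rewrite // modn_small.
rewrite (bigD1 (Ordinal r_gt1)) //= big1 => [|i]; last first.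
  by rewrite ceil_jump_one // -val_eqE => /negbTE ->.
by rewrite ceil_jump_one // mul1n addKn modnn addn0 ceil_frac_one //; lia.
Qed.

Lemma ceil_jump_pred r i : 1 < r -> i < r -> ceil_jump r.-1 r i = (0 < i).
Proof.
move=> r_gt1 i_lt; rewrite ceil_jumpE; [|lia|by []].
case: (posnP i) => [-> | i_gt0]; first by rewrite mul0n mod0n.
rewrite (_ : i * r.-1 = (i - 1) * r + (r - i)); last by nia.
by rewrite modnMDl modn_small; lia.
Qed.

Lemma ceil_frac_pred r k : 0 < r -> k <= r -> ceil_frac r.-1 r k = k - (k == r).
Proof. by move=> r_gt0 k_le; apply: ceil_divn_unique => //; case: eqP => /=; nia. Qed.

Lemma tau_counts_pred r : 1 < r -> tau_counts (fun i => (r.-1 * i + r - 1) %% r) r r.-1.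
Proof.
move=> r_gt1 k k_le; have r_gt0 : 0 < r by lia.
have count := sum_affine_modn_ltn _ _ _ _ r_gt1 (modn_predn_sqr _ r_gt1) k_le.
split=> //.
rewrite (bigD1 (Ordinal r_gt0)) //= in count.
rewrite (bigD1 (Ordinal r_gt0)) //= ceil_jump_pred // mul0n add0n ceil_frac_pred //.
rewrite (eq_bigr (fun i : 'I_r => nat_of_bool ((r.-1 * i + r - 1) %% r < k))) => [|i]; last first.
  by rewrite -val_eqE /= -lt0n => i_gt0; rewrite ceil_jump_pred // i_gt0 mul1n.
rewrite muln0 add0n modn_small in count; lia.
Qed.

Lemma tau_counts_base r a b : 1 < r -> b < r -> a * b %% r = 1 -> (a == 1) || (a == r.-1) ->
  tau_counts (fun i => (a * i + r - 1) %% r) r b.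
Proof.
move=> r_gt1 b_lt abE /orP [] /eqP a_eq; subst a.
  rewrite (_ : b = 1); first exact: tau_counts_one.
  by rewrite -abE mul1n modn_small.
rewrite (_ : b = r.-1); first exact: tau_counts_pred.
have inv := modn_predn_sqr _ r_gt1.
have /(modn_mulI _ _ _ inv) : r.-1 * b = r.-1 * r.-1 %[mod r] by rewrite abE inv.
by rewrite !modn_small //; lia.
Qed.

Section DanilovStep.
Variables r a b c : nat.
Hypotheses (a_gt1 : 1 < a) (a_lt : a.+1 < r) (b_lt : b < r) (abE : a * b = c * r + 1).

Lemma step_bounds : 0 < c < a /\ c < b /\ b - c < r - a.
Proof. nia. Qed.

Lemma step_inverseL : r %% (r - a) * (b - c) %% (r - a) = 1.
Proof.
rewrite {1}(_ : r = a + (r - a)); last by lia.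
rewrite modnDr modnMml (_ : a * (b - c) = c * (r - a) + 1); last by nia.
by rewrite modnMDl modn_small //; lia.
Qed.

Lemma step_inverseR : modneg r a * c %% a = 1.
Proof.
have a_gt0 : 0 < a by lia.
have v_lt := ltn_pmod r a_gt0; set v := r %% a in v_lt.
have sum0 : modneg r a * c + v * c = 0 %[mod a].
  rewrite /modneg -/v -modnDml modnMml modnDml -mulnDl subnK; last lia.
  by rewrite modnMr mod0n.
have pred0 : 1 + v * c = 0 %[mod a].
  by rewrite -modnDmr modnMml modnDmr mulnC addnC -abE modnMr mod0n.
have /eqP := etrans sum0 (esym pred0); rewrite eqn_modDr => /eqP ->.
by rewrite modn_small.
Qed.

Lemma ceil_frac_stepL i : i < r -> ceil_frac b r i = ceil_frac (b - c) (r - a) i.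
Proof.
move=> i_lt; have [c_in [c_lt bc_lt]] := step_bounds.
have := ceil_divn_bounds (r - a) (i * (b - c)); rewrite /ceil_frac.
set q := _ %/ (r - a); move=> [|lb ub]; first lia.
by apply: ceil_divn_unique; nia.
Qed.

Lemma ceil_frac_stepRD m : m <= a -> ceil_frac b r (r - a + m) = b - c + ceil_frac c a m.
Proof.
move=> m_le; have [c_in [c_lt bc_lt]] := step_bounds.
have := ceil_divn_bounds a (m * c); rewrite /ceil_frac.
set q := _ %/ a; move=> [|lb ub]; first lia.
by apply: ceil_divn_unique; nia.
Qed.

Lemma ceil_frac_stepR i : i < a -> ceil_frac b r i = ceil_frac c a i.
Proof.
move=> i_lt; have [c_in [c_lt bc_lt]] := step_bounds.
case: (posnP i) => [-> | i_gt0]; first by rewrite !ceil_frac0 //; lia.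
have := ceil_divn_bounds a (i * c); rewrite /ceil_frac.
set q := _ %/ a; move=> [|lb ub]; first lia.
have ac_coprime : coprime a c.
  have : gcdn a c %| c * r + 1 by rewrite -abE dvdn_mulr ?dvdn_gcdl.
  by rewrite dvdn_addr ?dvdn_mulr ?dvdn_gcdr // dvdn1.
have lb' : i * c < q * a.
  rewrite ltn_neqAle lb andbT; apply/negP => /eqP icE.
  have : a %| c * i by rewrite mulnC icE dvdn_mull.
  by rewrite Gauss_dvdr // => /dvdn_leq; lia.
by apply: ceil_divn_unique; nia.
Qed.

Lemma ceil_jump_stepR i : i < a -> ceil_jump b r i = ceil_jump c a i.
Proof. by move=> i_lt; rewrite /ceil_jump !ceil_frac_stepR //; lia. Qed.

Lemma ceil_jump_stepL i : a <= i < r ->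
  ceil_jump b r i = ceil_jump (b - c) (r - a) (i %% (r - a)).
Proof.
move=> i_in; have [_ [_ bc_lt]] := step_bounds.
by rewrite -ceil_jump_mod // /ceil_jump !ceil_frac_stepL //; lia.
Qed.

Lemma ceil_frac_step k : k <= r ->
  ceil_frac (b - c) (r - a) (minn k (r - a)) + ceil_frac c a (k - (r - a)) = ceil_frac b r k.
Proof.
move=> k_le; have [_ [_ bc_lt]] := step_bounds.
have [k_le_s | s_lt_k] := leqP k (r - a).
  rewrite (_ : k - (r - a) = 0) ?ceil_frac0 ?addn0 ?ceil_frac_stepL //; lia.
rewrite ceil_frac_id // -ceil_frac_stepRD; last lia.
by rewrite subnKC //; lia.
Qed.

Lemma tau_counts_step tL tR :
  (forall j, j < r - a -> tL j < r - a) ->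
  tau_counts tL (r - a) (b - c) -> tau_counts tR a c ->
  tau_counts (fun i => if a <= i then tL (i %% (r - a)) else r - a + tR i) r b.
Proof.
set s := r - a; set t := fun i => if a <= i then tL (i %% s) else s + tR i.
move=> tL_lt countL countR k k_le.
have s_gt0 : 0 < s by lia.
have [cntL wL] := countL (minn k s) (geq_minr _ _).
have kR_le : k - s <= a by lia.
have [cntR wR] := countR _ kR_le.
have tLk j : j < s -> (tL j < k) = (tL j < minn k s).
  by move=> /tL_lt; rewrite leq_min; case: (ltnP (tL j) k) => /=; lia.
have tRk i : (s + tR i < k) = (tR i < k - s) by lia.
split.
- rewrite (sum_split_modn r a (fun i => nat_of_bool (t i < k))
    (fun j => nat_of_bool (tL j < minn k s)) (fun i => nat_of_bool (tR i < k - s))).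
  + by rewrite -/s cntL cntR; lia.
  + lia.
  + by move=> i i_lt; rewrite /t (leqNgt a i) i_lt tRk.
  + by move=> i i_in; rewrite /t (andP i_in).1 tLk // ltn_pmod.
- rewrite (sum_split_modn r a (fun i => ceil_jump b r i * (t i < k))
    (fun j => ceil_jump (b - c) s j * (tL j < minn k s))
    (fun i => ceil_jump c a i * (tR i < k - s))).
  + by rewrite -/s wL wR addnC ceil_frac_step.
  + lia.
  + by move=> i i_lt; rewrite /t (leqNgt a i) i_lt tRk ceil_jump_stepR.
  + by move=> i i_in; rewrite /t (andP i_in).1 tLk ?ltn_pmod // ceil_jump_stepL.
Qed.

End DanilovStep.

Lemma tau_aux_lt n r a i : 0 < r -> a < r -> tau_aux n r a i < r.
Proof.
elim: n r a i => [|n IH] r a i r_gt0 a_lt //=.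
case: ifP => _; first exact: ltn_pmod.
case: (leqP a i) => [_ | i_lt]; last first.
  have a_gt0 : 0 < a by lia.
  by have := IH a (modneg r a) i a_gt0 (ltn_pmod _ a_gt0); lia.
have s_gt0 : 0 < r - a by lia.
by have := IH (r - a) (r %% (r - a)) (i %% (r - a)) s_gt0 (ltn_pmod _ s_gt0); lia.
Qed.

Lemma tau_aux_counts n r a b : 1 < r -> r <= n -> 0 < a -> a < r -> b < r -> a * b %% r = 1 ->
  tau_counts (tau_aux n r a) r b.
Proof.
elim: n r a b => [|n IH] r a b r_gt1 r_le a_gt0 a_lt b_lt abE; first lia.
move=> k k_le; have [a_base | a_rec] := boolP ((a == 1) || (a == r.-1)).
  by rewrite /= a_base; apply: tau_counts_base.
have a_gt1 : 1 < a by move: a_rec; case: (ltngtP a 1) => //; lia.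
have a_lt' : a.+1 < r by move: a_rec; case: (ltngtP a r.-1); rewrite ?orbT //; lia.
have abE' : a * b = a * b %/ r * r + 1 by rewrite {1}(divn_eq (a * b) r) abE.
move: (a * b %/ r) abE' => c abcE.
have [/andP [c_gt0 c_lt] [_ bc_lt]] := step_bounds _ _ _ _ a_gt1 a_lt' b_lt abcE.
have invL := step_inverseL _ _ _ _ a_gt1 a_lt' b_lt abcE.
have invR := step_inverseR _ _ _ _ a_gt1 a_lt' b_lt abcE.
have aL_gt0 : 0 < r %% (r - a) by move: invL; case: (r %% (r - a)) => //; rewrite mod0n.
have aR_gt0 : 0 < modneg r a by move: invR; case: (modneg r a) => //; rewrite mod0n.
have countL : tau_counts (tau_aux n (r - a) (r %% (r - a))) (r - a) (b - c).
  by apply: IH; rewrite ?aL_gt0 ?ltn_pmod //; lia.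
have countR : tau_counts (tau_aux n a (modneg r a)) a c.
  by apply: IH; rewrite ?aR_gt0 ?ltn_pmod //; lia.
have := tau_counts_step _ _ _ _ a_gt1 a_lt' b_lt abcE _ _ _ countL countR k k_le.
by rewrite /= (negbTE a_rec); apply=> j j_lt; apply: tau_aux_lt; rewrite ?ltn_pmod; lia.
Qed.

Local Open Scope ring_scope.

Lemma sum_dscale_Dd r (f : nat -> rat) (x : option 'I_r.+1) :
  (\sum_(i < r.+1) dscale (f i) (Dd r i)) x = if x is Some j then f j else 0.
Proof.
rewrite sum_ffunE; case: x => [j|]; last by apply: big1 => i _; rewrite !ffunE mulr0.
rewrite (bigD1 j) //= big1 => [|i i_ne]; first by rewrite !ffunE /= eqxx mulr1 addr0.
by rewrite !ffunE /= val_eqE eq_sym (negbTE i_ne) mulr0.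
Qed.

Lemma DZ_coef r (x : option 'I_r.+1) :
  DZ r x = if x is Some j then j%:R / r%:R else 0.
Proof. exact: sum_dscale_Dd. Qed.

Lemma Zdiv_coef r a i (x : option 'I_r.+1) :
  Zdiv r a i x = if x is Some j then (tau r a i < j)%N%:R else 0.
Proof.
rewrite sum_ffunE; case: x => [j|]; last by apply: big1 => k _; rewrite ffunE.
case: (ltnP (tau r a i) j) => [tau_lt | j_le].
  rewrite (bigD1 j) //= big1 => [|k /andP [_ k_ne]]; first by rewrite ffunE /= eqxx addr0.
  by rewrite ffunE /= val_eqE eq_sym (negbTE k_ne).
apply: big1 => k tau_lt; rewrite ffunE /=.
by case: eqP => // jk; move: tau_lt; rewrite -jk ltnNge j_le.
Qed.

Section Cycle.
Variables r a b : nat.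
Hypotheses (r_gt1 : (1 < r)%N) (a_gt0 : (0 < a)%N) (a_lt : (a < r)%N) (b_lt : (b < r)%N)
  (abE : (a * b %% r = 1)%N).

Let r_gt0 : (0 < r)%N := ltnW r_gt1.

Definition cycle_step l : divisor r := Zdiv r a (l * a %% r) - DZ r.
Definition cycle_sum l : divisor r := \sum_(1 <= l' < l.+1) cycle_step l'.

Lemma cycle_invK i : (i < r)%N -> (i * b %% r * a %% r = i)%N.
Proof. by move=> i_lt; rewrite modnMml -mulnA (mulnC b) -modnMmr abE muln1 modn_small. Qed.

Lemma cycle_idxK l : (l < r)%N -> (l * a %% r * b %% r = l)%N.
Proof. by move=> l_lt; rewrite modnMml -mulnA -modnMmr abE muln1 modn_small. Qed.

Lemma cycle_idx_pred l : ((l.+1 * a %% r + (r - a)) %% r = l * a %% r)%N.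
Proof. by rewrite modnDml (_ : l.+1 * a + (r - a) = l * a + r)%N ?modnDr // mulSn; lia. Qed.

Lemma cycle_inv_pred i : (i < r)%N ->
  ((i + (r - a)) %% r * b %% r = (i * b %% r + r - 1) %% r)%N.
Proof.
move=> i_lt; set y := ((i + (r - a)) %% r * b %% r)%N.
have y_lt : (y < r)%N by apply: ltn_pmod.
have ySE : ((y + 1) %% r = i * b %% r)%N.
  rewrite modnDml -{1}abE modnDmr -mulnDl -modnMml modnDml.
  by rewrite (_ : i + (r - a) + a = i + r)%N ?modnDr ?modnMml //; lia.
rewrite -ySE; case: (ltngtP (y + 1) r) => [y1_lt | y1_gt | y1E].
- by rewrite (modn_small y1_lt) (_ : y + 1 + r - 1 = y + r)%N ?modnDr ?modn_small //; lia.
- lia.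
- by rewrite y1E modnn add0n modn_small //; lia.
Qed.

Lemma sum_cycle (f : nat -> nat) : (\sum_(l < r) f (l * a %% r) = \sum_(i < r) f i)%N.
Proof.
pose h (l : 'I_r) : 'I_r := Ordinal (ltn_pmod (l * a) r_gt0).
have h_inj : injective h.
  move=> l l' /(congr1 (fun i : 'I_r => i * b %% r)%N) /=.
  by rewrite !cycle_idxK ?ltn_ord // => /val_inj.
by rewrite [RHS](reindex_inj h_inj).
Qed.

Lemma sum_cycle_ceil_jump (f : nat -> nat) :
  (\sum_(1 <= l < b.+1) f (l * a %% r) = \sum_(i < r) ceil_jump b r i * f i)%N.
Proof.
rewrite (big_nat_widen _ _ r) // big_geq_mkord big_mkcond.
rewrite -(sum_cycle (fun i => ceil_jump b r i * f i)%N).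
apply: eq_bigr => l _; rewrite ceil_jumpE ?ltn_pmod // cycle_idxK //.
by rewrite /= ltnS [in RHS]andbC; case: ifP => _; rewrite ?mul1n.
Qed.

Lemma cycle_step_coef l (x : option 'I_r.+1) : cycle_step l x =
  if x is Some j then (tau r a (l * a %% r) < j)%N%:R - j%:R / r%:R else 0.
Proof. by rewrite !ffunE Zdiv_coef DZ_coef; case: x => //; rewrite subr0. Qed.

Lemma sum_cycle_step : \sum_(l < r) cycle_step l = 0.
Proof.
apply/ffunP => x; rewrite sum_ffunE ffunE.
under eq_bigr => l _ do rewrite cycle_step_coef.
case: x => [j|]; last by rewrite big1.
rewrite sumrB -natr_sum (sum_cycle (fun i => nat_of_bool (tau r a i < j)%N)).
have [count _] := tau_aux_counts r r a b r_gt1 (leqnn r) a_gt0 a_lt b_lt abE j (ltn_ord j).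
rewrite /tau count sumr_const card_ord -[_ *+ r]mulr_natr divfK ?subrr //.
by rewrite pnatr_eq0 -lt0n.
Qed.

Lemma cycle_sum0 : cycle_sum 0 = 0.
Proof. exact: big_geq. Qed.

Lemma cycle_sumS l : cycle_sum l.+1 = cycle_sum l + cycle_step l.+1.
Proof. exact: big_nat_recr. Qed.

Lemma cycle_sum_pred : cycle_sum r.-1 = - cycle_step 0.
Proof.
apply: (addrI (cycle_step 0)); rewrite subrr -sum_cycle_step -(big_mkord xpredT).
by rewrite big_ltn // /cycle_sum prednK.
Qed.

Lemma R_spec_cycle R : R_spec a R -> forall l, (l < r)%N -> R (l * a %% r)%N = cycle_sum l.
Proof.
move=> [R0 RE]; elim=> [_ | l IH l_lt]; first by rewrite mul0n mod0n R0 cycle_sum0.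
have := RE _ (ltn_pmod (l.+1 * a) r_gt0); rewrite cycle_idx_pred IH ?(ltnW l_lt) // => ZE.
by rewrite cycle_sumS /cycle_step ZE addrAC (addrC (DZ r)) addrK addrC addNKr.
Qed.

Lemma R_spec_cycle_sum : R_spec a (fun i => cycle_sum (i * b %% r)).
Proof.
split=> [|i i_lt]; first by rewrite mul0n mod0n cycle_sum0.
rewrite cycle_inv_pred //; have := cycle_invK _ i_lt.
move: (i * b %% r)%N (ltn_pmod (i * b) r_gt0) => l l_lt lE.
case: (posnP l) => [l0 | l_gt0].
  rewrite l0 add0n subn1 modn_small ?cycle_sum_pred ?cycle_sum0; last lia.
  by rewrite /cycle_step -lE l0 mul0n mod0n addr0 opprK addrC subrK.
rewrite (_ : l + r - 1 = l.-1 + r)%N; last lia.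
rewrite modnDr modn_small; last lia.
rewrite -{1}(prednK l_gt0) cycle_sumS prednK // /cycle_step lE.
by rewrite addrCA [cycle_sum _ + _]addrC addrK addrC subrK.
Qed.

Lemma cycle_sum_coef l (j : 'I_r.+1) : cycle_sum l (Some j) =
  (\sum_(1 <= l' < l.+1) (tau r a (l' * a %% r) < j))%N%:R - l%:R * (j%:R / r%:R).
Proof.
rewrite sum_ffunE (eq_bigr _ (fun k _ => cycle_step_coef k (Some j))).
by rewrite sumrB natr_sum sumr_const_nat subn1 (mulr_natl _ l).
Qed.

Lemma R_spec_R1 R : R_spec a R -> R 1%N = \sum_(i < r.+1) dscale (e1p r b i) (Dd r i).
Proof.
move=> RS; have := R_spec_cycle R RS b b_lt; rewrite mulnC abE => ->.
apply/ffunP => x; rewrite sum_dscale_Dd; case: x => [j|]; last first.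
  by rewrite sum_ffunE big1 // => l _; rewrite cycle_step_coef.
have [_ ceilE] := tau_aux_counts r r a b r_gt1 (leqnn r) a_gt0 a_lt b_lt abE j (ltn_ord j).
rewrite cycle_sum_coef (sum_cycle_ceil_jump (fun i => tau r a i < j)%N) ceilE /e1p.
have /(congr1 (fun n => n%:R : rat)) := ceil_frac_modneg b r j b_lt.
rewrite !natrM natrD => ceilR.
have r_neq0 : r%:R != 0 :> rat by rewrite pnatr_eq0 -lt0n.
by rewrite -[_%:R](mulfK r_neq0) ceilR; field.
Qed.
End Cycle.


Lemma e1p_modn r b i : e1p r (b %% r) i = e1p r b i.
Proof. by rewrite /e1p /modneg modnMmr. Qed.

Theorem mainTheorem6 (r a b : nat)
  (hr : (1 < r)%N) (ha0 : (0 < a)%N) (har : (a < r)%N) (hcop : coprime r a)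
  (hb : (a * b = 1 %[mod r])%N) :
  (exists R : nat -> divisor r, R_spec a R) /\
  (forall R : nat -> divisor r, R_spec a R ->
     R 1%N = DX r b - E1 r /\
     R 1%N = \sum_(i < r.+1) dscale (e1p r b i) (Dd r i)).
Proof.
have b'_lt : (b %% r < r)%N by rewrite ltn_pmod // ltnW.
have ab'E : (a * (b %% r) %% r = 1)%N by rewrite modnMmr hb modn_small.
split; first by eexists; exact: (R_spec_cycle_sum _ _ _ hr ha0 har b'_lt ab'E).
move=> R RS; have := R_spec_R1 _ _ _ hr ha0 har b'_lt ab'E R RS.
under eq_bigr => i _ do rewrite e1p_modn.
by move=> R1E; rewrite /DX addrAC subrr add0r; split.
Qed.
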